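(* Let $\mathcal{H}$ be a Hilbert space of dimension $d$ with $2\le d<\infty$ and let $\mathbf{W}=\{W_y:y\in Y\}$ be a unitary system on $\mathcal{H}$. (i) There is a unique maximal family $\mathcal{V}_{\mathbf{W}}=\{\mathbf{V}_\alpha:\alpha\in\Lambda\}$ of $\mathbf{W}$-MASS's such that $\mathbf{W}=\bigcup_{\alpha\in\Lambda}\mathbf{V}_\alpha$. If each $W_y$ in $\mathbf{W}$ has simple eigenvalues, then the $\mathbf{V}_\alpha$'s are mutually disjoint. (ii) Let $\mathbf{W}'$ be another unitary system on $\mathcal{H}$ and $\mathcal{V}_{\mathbf{W}'}=\{\mathbf{V}'_\beta:\beta\in\Lambda'\}$ the corresponding family of $\mathbf{W}'$-MASS's as in (i). Then for a unitary $V$ on $\mathcal{H}$, $\mathbf{W}$ is collectively unitarily equivalent to $\mathbf{W}'$ via $V$ if and only if there is a bijection $\alpha\mapsto\alpha'$ from $\Lambda$ onto $\Lambda'$ such that $\mathbf{V}_\alpha$ is collectively unitarily equivalent to $\mathbf{V}'_{\alpha'}$ via $V$ for every $\alpha\in\Lambda$.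
   Context: A unitary system (US) on $\mathcal{H}$ is a nonempty set $\mathbf{W}=\{W_y:y\in Y\}$ of unitary operators on $\mathcal{H}$ with $\operatorname{tr}W_y=0$ and $\operatorname{tr}(W_x^*W_y)=d\,\delta_{xy}$ for $x,y\in Y$. An abelian unitary system (AUS) is a unitary system whose members pairwise commute. A maximal abelian subsystem of $\mathbf{W}$ ($\mathbf{W}$-MASS) is a subset of $\mathbf{W}$ which is an AUS and is maximal (under inclusion) with this property. For sets $\mathcal{F},\mathcal{G}$ of operators on $\mathcal{H}$ and a unitary $V$, $\mathcal{F}$ is collectively unitarily equivalent to $\mathcal{G}$ via $V$ if $\mathcal{G}=\{V^*AV: A\in\mathcal{F}\}$. *)

From HB Require Import structures.
From mathcomp Require Import all_boot all_order all_algebra.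
From mathcomp Require Import boolp classical_sets.
Set Implicit Arguments. Unset Strict Implicit. Unset Printing Implicit Defensive.
Import Order.TTheory GRing.Theory Num.Theory.
Local Open Scope ring_scope.
Local Open Scope classical_set_scope.

(* Operators on a d-dimensional Hilbert space = d x d matrices over an
   algebraically closed numeric field C (e.g. the complex numbers),
   in the standard orthonormal basis. *)

Section Defs.
Variables (C : numClosedFieldType) (d : nat).
Local Notation mx := 'M[C]_d.

Definition adjmx (A : mx) : mx := (map_mx Num.conj A)^T.

Definition unitary (U : mx) : Prop :=
  adjmx U *m U = 1%:M /\ U *m adjmx U = 1%:M.

Definition unitary_system (W : set mx) : Prop :=
  W !=set0 /\
  (forall U, W U -> unitary U /\ \tr U = 0) /\
  (forall U V, W U -> W V -> \tr (adjmx U *m V) = (d%:R * (U == V)%:R)).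

Definition abelian_unitary_system (W : set mx) : Prop :=
  unitary_system W /\ (forall U V, W U -> W V -> U *m V = V *m U).

Definition is_MASS (W S : set mx) : Prop :=
  S `<=` W /\ abelian_unitary_system S /\
  (forall T, S `<=` T -> T `<=` W -> abelian_unitary_system T -> T = S).

Definition fam_union (F : set (set mx)) : set mx :=
  fun A => exists2 S, F S & S A.

Definition MASS_cover (W : set mx) (F : set (set mx)) : Prop :=
  (forall S, F S -> is_MASS W S) /\ fam_union F = W.

Definition max_MASS_cover (W : set mx) (F : set (set mx)) : Prop :=
  MASS_cover W F /\ (forall G, MASS_cover W G -> G `<=` F).

Definition coll_unit_equiv (F G : set mx) (V : mx) : Prop :=
  G = (fun A => adjmx V *m A *m V) @` F.

Definition simple_eigenvalues (U : mx) : Prop :=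
  forall a : C, (mup a (char_poly U) <= 1)%N.

End Defs.

From HB Require Import structures.
From mathcomp Require Import all_boot all_order all_algebra zify.
From mathcomp Require Import boolp classical_sets.
Set Implicit Arguments. Unset Strict Implicit. Unset Printing Implicit Defensive.
Import Order.TTheory GRing.Theory Num.Theory.
Local Open Scope ring_scope.
Local Open Scope classical_set_scope.

(* By Zorn's lemma every element of W lies in some W-MASS, so the family of
   all W-MASSes covers W and contains every other cover by W-MASSes; hence it
   is the unique maximal one.  A matrix with simple spectrum has one-dimensional
   eigenspaces spanning the space; every matrix commuting with it preserves
   these lines, hence acts diagonally on them, so its centraliser is
   commutative.  Two W-MASSes sharing such an element therefore have a
   commutative union and coincide.  Finally, conjugation by a unitary V is a
   bijection preserving unitarity, traces and commutation, so it maps the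
   W-MASSes onto the (V^* W V)-MASSes; conversely, conjugating the pieces of a
   cover conjugates their union. *)

Lemma commutator_stable_rV (F : fieldType) n (v : 'rV[F]_n) (A B : 'M_n) :
  (v *m A <= v)%MS -> (v *m B <= v)%MS -> v *m (A *m B - B *m A) = 0.
Proof.
move=> /sub_rVP[a vA] /sub_rVP[b vB].
by rewrite mulmxBr !mulmxA vA vB -!scalemxAl vA vB !scalerA mulrC subrr.
Qed.

Section SimpleSpectrum.
Variables (F : closedFieldType) (n : nat) (U : 'M[F]_n).

Lemma char_poly_uniq_roots :
  (forall a, (mup a (char_poly U) <= 1)%N) ->
  exists2 rs : seq F, uniq rs & char_poly U = \prod_(r <- rs) ('X - r%:P).
Proof.
move=> simpleU; have [rs] := closed_field_poly_normal (char_poly U).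
rewrite (monicP (char_poly_monic U)) scale1r => cpU; exists rs => //.
apply: count_mem_uniq => a; have := simpleU a.
rewrite cpU mu_prod_XsubC -has_pred1 has_count.
by case: (count_mem a rs) => [|[]].
Qed.

Section Roots.
Variable rs : seq F.
Hypotheses (rs_uniq : uniq rs) (cpU : char_poly U = \prod_(r <- rs) ('X - r%:P)).

Let E (i : 'I_(size rs)) := eigenspace U rs`_i.

Lemma size_char_poly_roots : size rs = n.
Proof. by have := size_char_poly U; rewrite cpU size_prod_XsubC => -[]. Qed.

Lemma mxrank_eigenspace_root_gt0 i : (0 < \rank (E i))%N.
Proof.
rewrite lt0n mxrank_eq0; have := eigenvalue_root_char U rs`_i.
by rewrite /eigenvalue => ->; rewrite cpU root_prod_XsubC mem_nth.
Qed.

Lemma mxrank_sum_eigenspace_roots :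
  \rank (\sum_i E i) = (\sum_i \rank (E i))%N.
Proof.
apply/mxdirectP/mxdirect_sum_eigenspace => i j _ _ /eqP.
by rewrite nth_uniq // => /eqP/val_inj.
Qed.

(* n eigenspaces of positive rank in an n-dimensional space *)
Lemma mxrank_eigenspace_root i : \rank (E i) = 1%N.
Proof.
have rank_le : (\sum_j \rank (E j) <= n)%N.
  by rewrite -mxrank_sum_eigenspace_roots rank_leq_col.
have others : (#|predC1 i| <= \sum_(j | j != i) \rank (E j))%N.
  by rewrite -sum1_card leq_sum // => j _; apply: mxrank_eigenspace_root_gt0.
move: rank_le others; rewrite (bigD1 i) //= cardC1 card_ord.
have := mxrank_eigenspace_root_gt0 i; have := ltn_ord i.
have := size_char_poly_roots; move: (\sum_(j | _) _) => rest; lia.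
Qed.

Lemma eigenspace_roots_full : (1%:M <= \sum_i E i)%MS.
Proof.
rewrite sub1mx /row_full mxrank_sum_eigenspace_roots.
rewrite (eq_bigr (fun _ => 1%N)) => [|i _]; last exact: mxrank_eigenspace_root.
by rewrite sum1_card card_ord size_char_poly_roots.
Qed.

End Roots.

Lemma eigenspace_rank1_commutator a (A B : 'M[F]_n) :
  \rank (eigenspace U a) = 1%N -> comm_mx U A -> comm_mx U B ->
  (eigenspace U a <= kermx (A *m B - B *m A))%MS.
Proof.
move=> rank1 cUA cUB; apply/row_subP => k; apply/sub_kermxP.
set v := row k _; have [->|v_neq0] := eqVneq v 0; first by rewrite mul0mx.
have Ev : (eigenspace U a <= v)%MS.
  by rewrite -(mxrank_leqif_sup (row_sub k _)).2 rank_rV v_neq0 rank1.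
have stable_v X : comm_mx U X -> (v *m X <= v)%MS.
  move=> cUX; apply: submx_trans Ev.
  exact: submx_trans (submxMr _ (row_sub k _)) (comm_mx_stable_eigenspace _ cUX).
by apply: commutator_stable_rV; apply: stable_v.
Qed.

Lemma comm_mx_simple_spectrum (A B : 'M[F]_n) :
  (forall a, (mup a (char_poly U) <= 1)%N) ->
  comm_mx U A -> comm_mx U B -> comm_mx A B.
Proof.
move=> /char_poly_uniq_roots[rs rs_uniq cpU] cUA cUB.
have : (1%:M <= kermx (A *m B - B *m A))%MS.
  apply: submx_trans (eigenspace_roots_full rs_uniq cpU) _.
  apply/sumsmx_subP => i _; apply: eigenspace_rank1_commutator => //.
  exact: mxrank_eigenspace_root.
by move/sub_kermxP; rewrite mul1mx => /eqP; rewrite subr_eq0 => /eqP.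
Qed.

End SimpleSpectrum.

Section UnitarySystems.
Variables (C : numClosedFieldType) (d : nat).
Local Notation mx := 'M[C]_d.
Implicit Types (W X S T : set mx) (U A B V : mx).

Definition commuting X := forall A B, X A -> X B -> comm_mx A B.

Lemma unitary_system_sub W X :
  unitary_system W -> X `<=` W -> X !=set0 -> unitary_system X.
Proof.
move=> [_ [unitW orthW]] XW X_neq0; split => //; split.
  by move=> U /XW; apply: unitW.
by move=> A B /XW WA /XW WB; apply: orthW.
Qed.

Lemma abelian_unitary_system_sub W X : unitary_system W -> X `<=` W ->
  X !=set0 -> commuting X -> abelian_unitary_system X.
Proof. by move=> uW XW X_neq0 cX; split=> //; apply: unitary_system_sub uW XW X_neq0. Qed.

Lemma MASS_commuting W S : is_MASS W S -> commuting S.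
Proof. by case=> _ [[_ cS] _]. Qed.

(* Zorn's lemma, applied to the subsets of W commuting with each other and with U. *)
Lemma MASS_exists W U : unitary_system W -> W U -> exists2 S, is_MASS W S & S U.
Proof.
move=> uW WU.
pose P X := X `<=` W /\ commuting (X `|` [set U]).
have [|A [[AW cA] A_max]] := @Zorn_bigcup _ P.
  move=> F FP F_chain; split=> [x [X /FP[XW _] /XW //]|].
  have cU X x : F X -> X x -> comm_mx x U.
    by move=> /FP[_ cX] Xx; apply: cX; [left | right].
  move=> x y [[X FX Xx]|->] [[Y FY Yy]|->] //; last exact/esym/(cU _ _ FY Yy).
  - have [XY|YX] := F_chain X Y FX FY.
      by have [_ cY] := FP Y FY; apply: cY; left => //; apply: XY.
    by have [_ cX] := FP X FX; apply: cX; left => //; apply: YX.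
  - exact: cU FX Xx.
have SW : A `|` [set U] `<=` W by move=> x [/AW|->].
exists (A `|` [set U]); last by right.
split=> //; split; first by apply: abelian_unitary_system_sub uW SW _ cA; exists U; right.
move=> T AUT TW [_ cT].
have [TA|TnA] := pselect (T `<=` A).
  by apply/seteqP; split=> // x /TA; left.
exfalso; apply: (A_max T); first by split=> [x Ax|]; [apply: AUT; left|].
by split=> // x y [Tx|->] [Ty|->]; apply: cT => //; apply: AUT; right.
Qed.

Lemma MASS_cover_MASS W : unitary_system W -> MASS_cover W (is_MASS W).
Proof.
move=> uW; split=> //; apply/seteqP; split=> [x [S [SW _] /SW //]|x Wx].
by have [S mS Sx] := MASS_exists uW Wx; exists S.
Qed.

Lemma max_MASS_cover_MASS W : unitary_system W -> max_MASS_cover W (is_MASS W).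
Proof. by move=> uW; split=> [|G [GM _]]; [apply: MASS_cover_MASS|]. Qed.

Lemma max_MASS_cover_eq W F : unitary_system W -> max_MASS_cover W F ->
  F = is_MASS W.
Proof.
move=> uW [[FM _] F_max]; apply/seteqP; split=> //.
exact: F_max (MASS_cover_MASS uW).
Qed.

Lemma MASS_eq_simple_eigenvalues W S T U : unitary_system W ->
  is_MASS W S -> is_MASS W T -> S U -> T U -> simple_eigenvalues U -> S = T.
Proof.
move=> uW mS mT SU TU simpleU.
have [[SW [_ S_max]] [TW [_ T_max]]] := (mS, mT).
have cU A : S A \/ T A -> comm_mx U A.
  by case=> [SA|TA]; [apply: (MASS_commuting mS) | apply: (MASS_commuting mT)].
have cST : commuting (S `|` T).
  by move=> A B SA SB; apply: (comm_mx_simple_spectrum simpleU); apply: cU.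
have STW : S `|` T `<=` W by move=> x [/SW|/TW].
have aST : abelian_unitary_system (S `|` T).
  by apply: abelian_unitary_system_sub uW STW _ cST; exists U; left.
rewrite -(S_max _ (@subsetUl _ S T) STW aST).
exact: T_max _ (@subsetUr _ S T) STW aST.
Qed.

Lemma adjmxM A B : adjmx (A *m B) = adjmx B *m adjmx A.
Proof. by rewrite /adjmx map_mxM trmx_mul. Qed.

Lemma adjmxK : involutive (@adjmx C d).
Proof. by move=> A; apply/matrixP => i j; rewrite !mxE conjCK. Qed.

Lemma unitary_adjmx V : unitary V -> unitary (adjmx V).
Proof. by case=> VV1 V1V; split; rewrite adjmxK. Qed.

Definition uconj V A := adjmx V *m A *m V.

Section UnitaryConjugation.
Variable V : mx.
Hypothesis uV : unitary V.

Lemma uconjM A B : uconj V A *m uconj V B = uconj V (A *m B).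
Proof.
case: uV => _ V1V.
by rewrite /uconj !mulmxA -[adjmx V *m A *m V *m _]mulmxA V1V mulmx1.
Qed.

Lemma uconj1 : uconj V 1%:M = 1%:M.
Proof. by case: uV => VV1 _; rewrite /uconj mulmx1. Qed.

Lemma adjmx_uconj A : adjmx (uconj V A) = uconj V (adjmx A).
Proof. by rewrite /uconj !adjmxM adjmxK mulmxA. Qed.

Lemma mxtrace_uconj A : \tr (uconj V A) = \tr A.
Proof. by case: uV => _ V1V; rewrite /uconj mxtrace_mulC mulmxA V1V mul1mx. Qed.

Lemma uconjK : cancel (uconj V) (uconj (adjmx V)).
Proof.
case: uV => _ V1V A.
by rewrite /uconj adjmxK !mulmxA V1V mul1mx -mulmxA V1V mulmx1.
Qed.

Lemma uconjVK : cancel (uconj (adjmx V)) (uconj V).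
Proof.
case: uV => VV1 _ A.
by rewrite /uconj adjmxK !mulmxA VV1 mul1mx -mulmxA VV1 mulmx1.
Qed.

Lemma uconj_inj : injective (uconj V).
Proof. exact: can_inj uconjK. Qed.

Lemma image_uconjK X : uconj (adjmx V) @` (uconj V @` X) = X.
Proof. by rewrite image_comp; apply: eq_image_id => A _; apply: uconjK. Qed.

Lemma image_uconjVK X : uconj V @` (uconj (adjmx V) @` X) = X.
Proof. by rewrite image_comp; apply: eq_image_id => A _; apply: uconjVK. Qed.

Lemma unitary_system_uconj X : unitary_system X -> unitary_system (uconj V @` X).
Proof.
move=> [[U XU] [unitX orthX]]; split; first by exists (uconj V U), U.
split=> [_ [A XA <-]|_ _ [A XA <-] [B XB <-]].
  have [[AA1 A1A] trA] := unitX A XA.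
  by rewrite mxtrace_uconj; split=> //; split; rewrite adjmx_uconj uconjM ?AA1 ?A1A uconj1.
by rewrite adjmx_uconj uconjM mxtrace_uconj orthX // (inj_eq uconj_inj).
Qed.

Lemma commuting_uconj X : commuting X -> commuting (uconj V @` X).
Proof. by move=> cX _ _ [A XA <-] [B XB <-]; rewrite /comm_mx !uconjM cX. Qed.

Lemma abelian_unitary_system_uconj X :
  abelian_unitary_system X -> abelian_unitary_system (uconj V @` X).
Proof.
by case=> uX cX; split; [apply: unitary_system_uconj | apply: commuting_uconj].
Qed.

End UnitaryConjugation.

Lemma MASS_uconj V W S : unitary V ->
  is_MASS W S -> is_MASS (uconj V @` W) (uconj V @` S).
Proof.
move=> uV [SW [aS S_max]]; split; first exact: image_subset.
split=> [|T ST TW aT]; first exact: abelian_unitary_system_uconj.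
have uV' := unitary_adjmx uV.
rewrite -(image_uconjVK uV T); congr (_ @` _); apply: S_max.
- by rewrite -(image_uconjK uV S); apply: image_subset.
- by rewrite -(image_uconjK uV W); apply: image_subset.
- exact: abelian_unitary_system_uconj.
Qed.

Lemma MASS_uconjP V W S : unitary V ->
  is_MASS (uconj V @` W) S <-> is_MASS W (uconj (adjmx V) @` S).
Proof.
move=> uV; split=> mS.
  by rewrite -(image_uconjK uV W); apply: MASS_uconj => //; apply: unitary_adjmx.
by rewrite -(image_uconjVK uV S); apply: MASS_uconj.
Qed.

Lemma coll_unit_equiv_fam_union F F' (f : set mx -> set mx) V :
  (forall S, F S -> F' (f S)) -> (forall S', F' S' -> exists2 S, F S & f S = S') ->
  (forall S, F S -> coll_unit_equiv S (f S) V) ->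
  coll_unit_equiv (fam_union F) (fam_union F') V.
Proof.
move=> fF f_surj f_equiv; apply/seteqP; split.
  move=> x [_ /f_surj[S FS <-]]; rewrite (f_equiv S FS) => -[y Sy <-].
  by exists y => //; exists S.
move=> _ [y [S FS Sy] <-]; exists (f S); first exact: fF.
by rewrite (f_equiv S FS); exists y.
Qed.

End UnitarySystems.

Theorem theorem2p8 (C : numClosedFieldType) (d : nat) (W : set 'M[C]_d) :
  (2 <= d)%N -> unitary_system W ->
  (* (i) existence and uniqueness of the maximal family of W-MASS's covering W *)
  (exists F : set (set 'M[C]_d),
     max_MASS_cover W F /\ (forall F', max_MASS_cover W F' -> F' = F)) /\
  (* (i) disjointness under simple eigenvalues *)
  (forall F : set (set 'M[C]_d), max_MASS_cover W F ->
     (forall U, W U -> simple_eigenvalues U) ->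
     forall S T, F S -> F T -> S <> T -> S `&` T = set0) /\
  (* (ii) *)
  (forall (W' : set 'M[C]_d) (F F' : set (set 'M[C]_d)) (V : 'M[C]_d),
     unitary_system W' -> max_MASS_cover W F -> max_MASS_cover W' F' ->
     unitary V ->
     (coll_unit_equiv W W' V <->
      exists f : set 'M[C]_d -> set 'M[C]_d,
        [/\ (forall S, F S -> F' (f S)),
            (forall S T, F S -> F T -> f S = f T -> S = T),
            (forall S', F' S' -> exists2 S, F S & f S = S') &
            (forall S, F S -> coll_unit_equiv S (f S) V)])).
Proof.
move=> _ uW; split; [|split].
- exists (is_MASS W); split; first exact: max_MASS_cover_MASS.
  by move=> F'; apply: max_MASS_cover_eq.
- move=> F /(max_MASS_cover_eq uW) -> simpleW S T mS mT S_neq_T.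
  apply/seteqP; split=> // U [SU TU]; apply: S_neq_T.
  have WU : W U by case: mS => /(_ U SU).
  exact: (MASS_eq_simple_eigenvalues uW mS mT SU TU (simpleW U WU)).
move=> W' F F' V uW' mF mF' uV; split.
  move=> W'E; rewrite (max_MASS_cover_eq uW mF) (max_MASS_cover_eq uW' mF') W'E.
  exists (fun S => uconj V @` S); split=> //.
  - by move=> S; apply: MASS_uconj.
  - by move=> S T _ _ /(congr1 (image^~ (uconj (adjmx V)))); rewrite !image_uconjK.
  - move=> S' /(MASS_uconjP _ _ uV) mS'; exists (uconj (adjmx V) @` S') => //.
    exact: image_uconjVK.
case=> f [fF _ f_surj f_equiv].
have [[_ <-] _] := mF; have [[_ <-] _] := mF'.
exact: coll_unit_equiv_fam_union f_surj f_equiv.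
Qed.
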